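(* Let $D_1,D_2\subseteq\mathbb{N}$. If $D_1\cup D_2$ is accessible, then $D_1$ is accessible or $D_2$ is accessible.
   Context: For $D\subseteq\mathbb{N}$, a $k$-term $D$-diffsequence is a sequence of integers $x_1,\dots,x_k$ with $x_{i+1}-x_i\in D$ for all $i$. $D$ is accessible if for every $r\in\mathbb{N}$, every $r$-coloring of $\mathbb{N}$ and every $k\ge1$ there is a monochromatic $k$-term $D$-diffsequence in $\mathbb{N}$. *)

From mathcomp Require Import all_boot.
Set Implicit Arguments. Unset Strict Implicit. Unset Printing Implicit Defensive.

(* N = {1,2,3,...}.  A subset D of N is a predicate on nat (with 0 \notin D
   imposed as a hypothesis where needed). *)

Definition diffseq (D : nat -> Prop) (k : nat) (x : nat -> nat) : Prop :=
  (forall i, i < k -> 0 < x i) /\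
  (forall i, i.+1 < k -> exists2 d, D d & x i.+1 = x i + d).

Definition accessible (D : nat -> Prop) : Prop :=
  forall (r : nat) (c : nat -> 'I_r), 0 < r ->
  forall k : nat, 0 < k ->
  exists x : nat -> nat, diffseq D k x /\
    (forall i, i < k -> c (x i) = c (x 0)).

(* If D is not accessible, fix a colouring c with no monochromatic k-term
   D-diffsequence and colour n additionally by the length of the longest
   monochromatic D-diffsequence starting at n, which is less than k.  Along a
   monochromatic step n -> n + d with d in D this length strictly drops, so the
   refined finite colouring has no monochromatic 2-term D-diffsequence at all.
   For non-accessible D1 and D2 the product of the two refined colourings then
   has no monochromatic 2-term (D1 u D2)-diffsequence. *)

From Stdlib Require Import Classical ClassicalEpsilon.
From mathcomp Require Import all_boot.

Set Implicit Arguments.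
Unset Strict Implicit.
Unset Printing Implicit Defensive.

Lemma not_accessibleP (D : nat -> Prop) : ~ accessible D ->
  exists r (c : nat -> 'I_r) k,
    forall x, diffseq D k x -> ~ (forall i, i < k -> c (x i) = c (x 0)).
Proof.
move=> notD; apply: NNPP => noc; apply: notD => r c _ k _.
apply: NNPP => nox; apply: noc; exists r, c, k => x Dx mono.
by apply: nox; exists x.
Qed.

Lemma accessible_mono_step (D : nat -> Prop) (T : finType) (g : nat -> T) :
  accessible D -> exists n d, [/\ 0 < n, D d & g n = g (n + d)].
Proof.
move=> accD.
have T0 : 0 < #|T| by apply/card_gt0P; exists (g 0).
have [x [[pos_x step_x] mono_x]] := accD _ (enum_rank \o g) T0 2 isT.
have [d Dd x1] := step_x 0 isT.
exists (x 0), d; split=> //; first exact: pos_x.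
by apply: enum_rank_inj; rewrite -x1; exact: (esym (mono_x 1 isT)).
Qed.

Section LongestMonochromaticRun.

Variables (D : nat -> Prop) (r : nat) (c : nat -> 'I_r) (k : nat).
Hypothesis no_mono :
  forall x, diffseq D k x -> ~ (forall i, i < k -> c (x i) = c (x 0)).

Definition mono_run (n m : nat) : Prop :=
  exists x, [/\ diffseq D m x, x 0 = n & forall i, i < m -> c (x i) = c n].

Definition mono_runb (n m : nat) : bool := excluded_middle_informative (mono_run n m).

Lemma mono_runbP n m : reflect (mono_run n m) (mono_runb n m).
Proof. by rewrite /mono_runb; case: excluded_middle_informative; constructor. Qed.

Lemma mono_run0 n : mono_run n 0.
Proof. by exists (fun=> n); split=> //; split. Qed.

Lemma mono_run_lt n m : mono_run n m -> m < k.
Proof.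
move=> [x [[pos_x step_x] x0 mono_x]]; rewrite ltnNge; apply/negP => km.
have dx : diffseq D k x.
  by split=> i ik; [apply: pos_x | apply: step_x]; apply: leq_trans km.
apply: (no_mono dx) => i ik; rewrite x0 mono_x //; exact: leq_trans km.
Qed.

Lemma mono_run_cons n d m : 0 < n -> D d -> c n = c (n + d) ->
  mono_run (n + d) m -> mono_run n m.+1.
Proof.
move=> n0 Dd cnd [x [[pos_x step_x] x0 mono_x]].
exists (fun i => if i is j.+1 then x j else n); split=> //.
- split; first by case=> [|i] //= /pos_x.
  case=> [|i] /= im; last exact: step_x.
  by exists d; rewrite ?x0.
- by case=> [|i] //= im; rewrite mono_x // cnd.
Qed.

Lemma mono_runb_exists n : exists m, mono_runb n m.
Proof. by exists 0; apply/mono_runbP/mono_run0. Qed.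

Lemma mono_runb_ub n m : mono_runb n m -> m <= k.
Proof. by move/mono_runbP/mono_run_lt/ltnW. Qed.

Definition longest_run (n : nat) : nat :=
  ex_maxn (mono_runb_exists n) (@mono_runb_ub n).

Lemma longest_runP n : mono_run n (longest_run n).
Proof. by rewrite /longest_run; case: ex_maxnP => m /mono_runbP. Qed.

Lemma longest_run_max n m : mono_run n m -> m <= longest_run n.
Proof.
by rewrite /longest_run; case: ex_maxnP => l _ lmax /mono_runbP /lmax.
Qed.

Lemma longest_run_lt n : longest_run n < k.
Proof. exact/mono_run_lt/longest_runP. Qed.

Lemma longest_run_decr n d : 0 < n -> D d -> c n = c (n + d) ->
  longest_run (n + d) < longest_run n.
Proof.
move=> n0 Dd cnd; apply: longest_run_max.
exact: mono_run_cons (longest_runP (n + d)).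
Qed.

Definition refined_colouring (n : nat) : 'I_r * 'I_k :=
  (c n, Ordinal (longest_run_lt n)).

Lemma refined_colouring_proper n d : 0 < n -> D d ->
  refined_colouring n != refined_colouring (n + d).
Proof.
move=> n0 Dd; apply/eqP => -[cnd lnd].
by have := longest_run_decr n0 Dd cnd; rewrite lnd ltnn.
Qed.

End LongestMonochromaticRun.

Lemma not_accessible_proper_colouring (D : nat -> Prop) : ~ accessible D ->
  exists (T : finType) (g : nat -> T), forall n d, 0 < n -> D d -> g n != g (n + d).
Proof.
move=> /not_accessibleP [r [c [k no_mono]]].
by exists ('I_r * 'I_k)%type, (refined_colouring no_mono);
  exact: refined_colouring_proper.
Qed.

Theorem mainTheorem12 (D1 D2 : nat -> Prop) :
  (forall d, D1 d -> 0 < d) -> (forall d, D2 d -> 0 < d) ->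
  accessible (fun d => D1 d \/ D2 d) -> accessible D1 \/ accessible D2.
Proof.
move=> _ _ accD.
case: (classic (accessible D1)) => [|notD1]; first by left.
case: (classic (accessible D2)) => [|notD2]; first by right.
have [T1 [g1 proper1]] := not_accessible_proper_colouring notD1.
have [T2 [g2 proper2]] := not_accessible_proper_colouring notD2.
have [n [d [n0 [D1d | D2d] gnd]]] :=
  accessible_mono_step (fun n => (g1 n, g2 n)) accD; case: gnd => g1nd g2nd.
- by have := proper1 _ _ n0 D1d; rewrite g1nd eqxx.
- by have := proper2 _ _ n0 D2d; rewrite g2nd eqxx.
Qed.
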